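(* Let $A$ be a Banach algebra and let $J$ be a right ideal in $A$ which is dense in $A$ for the norm topology. Then $J$ is quasi-directly finite if and only if $A$ is quasi-directly finite.
   Context: For $a,b$ in a ring $R$ (not necessarily unital), $a\diamond b := a+b-ab$; if $a\diamond b=0$ then $a$ is a left quasi-inverse of $b$ and $b$ a right quasi-inverse of $a$. A ring $R$ is quasi-directly finite if every element having a left quasi-inverse in $R$ also has a right quasi-inverse in $R$ (equivalently, $a\diamond b=0$ implies $b\diamond a=0$ for all $a,b\in R$). Here $J$ is regarded as a ring with the operations inherited from $A$. *)

From HB Require Import structures.
From mathcomp Require Import all_boot all_order all_algebra.
From mathcomp Require Import all_classical all_reals all_analysis.
Set Implicit Arguments. Unset Strict Implicit. Unset Printing Implicit Defensive.
Import Order.TTheory GRing.Theory Num.Theory.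
Import numFieldNormedType.Exports.
Local Open Scope classical_set_scope.
Local Open Scope ring_scope.

Record banach_algebra_mul (R : realType) (V : completeNormedModType R)
    (mul : V -> V -> V) : Prop := BanachAlgebraMul {
  ba_mulA : forall x y z, mul x (mul y z) = mul (mul x y) z;
  ba_mulDl : forall x y z, mul (x + y) z = mul x z + mul y z;
  ba_mulDr : forall x y z, mul x (y + z) = mul x y + mul x z;
  ba_mulZl : forall (k : R) x y, mul (k *: x) y = k *: mul x y;
  ba_mulZr : forall (k : R) x y, mul x (k *: y) = k *: mul x y;
  ba_normM : forall x y, `|mul x y| <= `|x| * `|y|
}.

Definition qdiamond (V : zmodType) (mul : V -> V -> V) (a b : V) : V :=
  a + b - mul a b.

Definition right_ideal (R : realType) (V : lmodType R) (mul : V -> V -> V)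
    (J : set V) : Prop :=
  [/\ J 0,
      forall x y, J x -> J y -> J (x + y),
      forall (k : R) x, J x -> J (k *: x)
    & forall x a, J x -> J (mul x a)].

Definition quasi_directly_finite (V : zmodType) (mul : V -> V -> V)
    (S : set V) : Prop :=
  forall a b, S a -> S b -> qdiamond mul a b = 0 -> qdiamond mul b a = 0.

From HB Require Import structures.
From mathcomp Require Import all_boot all_order all_algebra.
From mathcomp Require Import all_classical all_reals all_analysis.
Import Order.TTheory GRing.Theory Num.Theory.
Import numFieldNormedType.Exports.
Local Open Scope classical_set_scope.
Local Open Scope ring_scope.
Set Implicit Arguments. Unset Strict Implicit. Unset Printing Implicit Defensive.

(* Approximate a by j in J.  Then j ◇ b = (j - a) - (j - a) b is small, hence
   right quasi-invertible by a contraction argument, say (j ◇ b) ◇ r' = 0.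
   So t := b ◇ r' is a right quasi-inverse of j, and t = j t - j lies in J.
   Quasi-direct finiteness of J gives t ◇ j = 0, i.e. b ◇ (r' ◇ j) = 0, and
   since a left and a right quasi-inverse of b coincide, a = r' ◇ j. *)

Section QuasiInverse.
Variables (V : zmodType) (mul : V -> V -> V).
Hypotheses (mulA : forall x y z, mul x (mul y z) = mul (mul x y) z)
  (mulDl : forall x y z, mul (x + y) z = mul x z + mul y z)
  (mulDr : forall x y z, mul x (y + z) = mul x y + mul x z).

Local Notation d := (qdiamond mul).

Lemma mul0l x : mul 0 x = 0.
Proof. by apply: (addrI (mul 0 x)); rewrite -mulDl !addr0. Qed.

Lemma mul0r x : mul x 0 = 0.
Proof. by apply: (addrI (mul x 0)); rewrite -mulDr !addr0. Qed.

Lemma mulBl x y z : mul (x - y) z = mul x z - mul y z.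
Proof. by apply: (addIr (mul y z)); rewrite -mulDl !subrK. Qed.

Lemma mulBr x y z : mul x (y - z) = mul x y - mul x z.
Proof. by apply: (addIr (mul x z)); rewrite -mulDr !subrK. Qed.

Lemma qdiamond0l x : d 0 x = x.
Proof. by rewrite /qdiamond mul0l add0r subr0. Qed.

Lemma qdiamond0r x : d x 0 = x.
Proof. by rewrite /qdiamond mul0r addr0 subr0. Qed.

Lemma qdiamondA x y z : d (d x y) z = d x (d y z).
Proof.
rewrite /qdiamond mulBl !mulDl mulBr !mulDr mulA.
move: (mul x y) (mul x z) (mul y z) (mul (mul x y) z) => A B C D.
rewrite !opprD !opprK !addrA; congr (_ + D).
by rewrite (addrAC (x + y) (- A)) ![in RHS](addrAC _ (- C)).
Qed.

Lemma qdiamond_linv_rinv a b c : d a b = 0 -> d b c = 0 -> a = c.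
Proof.
by move=> ab bc; rewrite -(qdiamond0r a) -bc -qdiamondA ab qdiamond0l.
Qed.

Lemma qdiamond_perturb a b j :
  d a b = 0 -> d j b = (j - a) - mul (j - a) b.
Proof.
move=> ab; rewrite -[d j b]subr0 -ab /qdiamond mulBl !opprD !opprK.
rewrite !addrA; congr (_ + _).
by rewrite (addrAC _ (- a)) (addrAC (j + b)) addrK addrAC.
Qed.

End QuasiInverse.

Lemma right_ideal_rinv (R : realType) (V : lmodType R) (mul : V -> V -> V)
    (J : set V) j t :
  right_ideal mul J -> J j -> qdiamond mul j t = 0 -> J t.
Proof.
move=> [_ JD JZ JM] Jj /eqP; rewrite /qdiamond subr_eq0 => /eqP jt.
have -> : t = mul j t + (-1) *: j by rewrite -jt scaleN1r addrAC subrr add0r.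
by apply: JD; [apply: JM | apply: JZ].
Qed.

Section BanachAlgebra.
Variables (R : realType) (V : completeNormedModType R) (mul : V -> V -> V).
Hypothesis HB : banach_algebra_mul mul.

Local Notation d := (qdiamond mul).

(* A right quasi-inverse of r is a fixed point of x |-> r x - r, a
   contraction of ratio |r|. *)
Lemma qdiamond_rinv_small r : `|r| < 1 -> exists r', d r r' = 0.
Proof.
move=> r1; pose f := @mkfun V V setT setT (fun x => mul r x - r) (fun _ _ => I).
have f_contr : is_contraction f.
  exists `|r|%:nng; split => // -[x y] _ /=.
  rewrite opprD opprK addrACA addNr addr0 -(mulBr (ba_mulDr HB)).
  exact: (ba_normM HB).
have [p _ fp] := banach_fixed_point f_contr closedT (ex_intro _ 0 I).
by exists p; rewrite /qdiamond {1}fp /f /mkfun /= addrCA subrr addr0 subrr.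
Qed.

Lemma qdiamond_perturb_small a b j :
  d a b = 0 -> `|j - a| < (1 + `|b|)^-1 -> `|d j b| < 1.
Proof.
move=> ab ja; rewrite (qdiamond_perturb (ba_mulDl HB) j ab).
apply: le_lt_trans (ler_normB _ _) _.
apply: le_lt_trans (lerD (lexx _) (ba_normM HB _ _)) _.
by rewrite -{1}[`|j - a|]mulr1 -mulrDr mulrC -ltr_pdivlMl ?ltr_wpDr // mulr1.
Qed.

End BanachAlgebra.

Lemma dense_approx (R : realType) (V : normedModType R) (J : set V) a e :
  closure J = setT -> 0 < e -> exists2 j, J j & `|j - a| < e.
Proof.
move=> Jd e0; have : closure J a by rewrite Jd.
move=> /(_ _ (nbhsx_ballx a e e0)) [j [Jj]].
by rewrite -ball_normE /= distrC => ja; exists j.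
Qed.

Theorem proposition2p8 (R : realType) (V : completeNormedModType R)
    (mul : V -> V -> V) (J : set V) :
  banach_algebra_mul mul ->
  right_ideal mul J ->
  closure J = setT ->
  (quasi_directly_finite mul J <-> quasi_directly_finite mul setT).
Proof.
move=> HB JI Jd; split=> [HJ a b _ _ ab|HA a b _ _]; last exact: HA.
have [mulA mulDl mulDr _ _ _] := HB.
have [j Jj ja] : exists2 j, J j & `|j - a| < (1 + `|b|)^-1.
  by apply: dense_approx; rewrite ?invr_gt0 ?ltr_wpDr.
have [r' jbr'] := qdiamond_rinv_small HB (qdiamond_perturb_small HB ab ja).
have jt : qdiamond mul j (qdiamond mul b r') = 0.
  by rewrite -(qdiamondA mulA mulDl mulDr).
have tj := HJ _ _ Jj (right_ideal_rinv JI Jj jt) jt.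
have bc : qdiamond mul b (qdiamond mul r' j) = 0.
  by rewrite -(qdiamondA mulA mulDl mulDr).
by have -> := qdiamond_linv_rinv mulA mulDl mulDr ab bc.
Qed.
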